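(* Let $\rho_1,\rho_2,k_1,k_2,L>0$ and $0<\alpha<1$, take $\eta=0$, and let $\mathcal{A}$ be the operator on $\mathcal{H}$ described in the context. Then $\mathcal{A}$ is not invertible; consequently $0\in\sigma(\mathcal{A})$.
   Context: Set $\mu(\xi)=|\xi|^{(2\alpha-1)/2}$ for $\xi\in\mathbb{R}$ and $\mathfrak{C}=\pi^{-1}\sin(\alpha\pi)$. All function spaces are complex. Let $\mathbb{H}^1_0=\{(u,v)\in H^1(-L,0)\times H^1(0,L):\ u(-L)=v(L)=0,\ u(0)=v(0)\}$, $\mathbb{L}^2=L^2(-L,0)\times L^2(0,L)$, and $\mathcal{H}=\mathbb{H}^1_0\times\mathbb{L}^2\times L^2(\mathbb{R};\mathbb{L}^2)$, whose elements are written $\mathbb{U}=(u,v,U,V,\varphi_1,\varphi_2)$ with $(u,v)\in\mathbb{H}^1_0$, $(U,V)\in\mathbb{L}^2$, $\varphi_1\in L^2(\mathbb{R};L^2(-L,0))$, $\varphi_2\in L^2(\mathbb{R};L^2(0,L))$ (functions of $(x,\xi)$). $\mathcal{H}$ is a Hilbert space with inner product $\langle\mathbb{U},\tilde{\mathbb{U}}\rangle_{\mathcal H}=\rho_1\int_{-L}^0U\overline{\tilde U}dx+\rho_2\int_0^LV\overline{\tilde V}dx+k_1\int_{-L}^0u_x\overline{\tilde u_x}dx+k_2\int_0^Lv_x\overline{\tilde v_x}dx+\mathfrak{C}\int_{\mathbb R}\int_{-L}^0\varphi_1\overline{\tilde\varphi_1}\,dx\,d\xi+\mathfrak{C}\int_{\mathbb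 R}\int_0^L\varphi_2\overline{\tilde\varphi_2}\,dx\,d\xi$. The domain $\mathcal{D}(\mathcal{A})$ is the set of $\mathbb{U}=(u,v,U,V,\varphi_1,\varphi_2)\in\mathcal{H}$ such that $(U,V)\in\mathbb{H}^1_0$, $u\in H^2(-L,0)$, $v\in H^2(0,L)$, $k_1u_x(0)=k_2v_x(0)$, $|\xi|\varphi_1\in L^2(\mathbb{R};L^2(-L,0))$, $-(|\xi|^2+\eta)\varphi_1+\mu(\xi)U\in L^2(\mathbb{R};L^2(-L,0))$, $|\xi|\varphi_2\in L^2(\mathbb{R};L^2(0,L))$, $-(|\xi|^2+\eta)\varphi_2+\mu(\xi)V\in L^2(\mathbb{R};L^2(0,L))$; and $$\mathcal{A}\mathbb{U}=\Big(U,\ V,\ \tfrac{1}{\rho_1}\big[k_1u_{xx}-\mathfrak{C}\textstyle\int_{\mathbb R}\mu(\xi)\varphi_1(\cdot,\xi)d\xi\big],\ \tfrac{1}{\rho_2}\big[k_2v_{xx}-\mathfrak{C}\textstyle\int_{\mathbb R}\mu(\xi)\varphi_2(\cdot,\xi)d\xi\big],\ -(|\xi|^2+\eta)\varphi_1+\mu(\xi)U,\ -(|\xi|^2+\eta)\varphi_2+\mu(\xi)V\Big).$$ *)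

From HB Require Import structures.
From mathcomp Require Import all_boot all_order all_algebra.
From mathcomp Require Import all_classical all_reals all_analysis.
From mathcomp Require Import complex.
Set Implicit Arguments. Unset Strict Implicit. Unset Printing Implicit Defensive.
Import Order.TTheory GRing.Theory Num.Theory.
Local Open Scope classical_set_scope.
Local Open Scope ring_scope.

Section Defs.
Variable R : realType.
Local Notation C := R[i].
Local Notation leb := (@lebesgue_measure R).

Definition cnorm2 (z : C) : R := complex.Re z ^+ 2 + complex.Im z ^+ 2.

Definition cint (D : set R) (f : R -> C) : C :=
  (Rintegral leb D (fun x => complex.Re (f x)) +i* Rintegral leb D (fun x => complex.Im (f x)))%C.

Definition L2 (D : set R) (f : R -> C) : Prop :=
  measurable_fun D (fun x => complex.Re (f x)) /\ measurable_fun D (fun x => complex.Im (f x)) /\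
  (\int[leb]_(x in D) (cnorm2 (f x))%:E < +oo)%E.

(* phi : (x, xi) |-> phi x xi belongs to L^2(R; L^2(D)) = L^2(D x R) *)
Definition L2xR (D : set R) (phi : R -> R -> C) : Prop :=
  measurable_fun (D `*` setT) (fun z : R * R => complex.Re (phi z.1 z.2)) /\
  measurable_fun (D `*` setT) (fun z : R * R => complex.Im (phi z.1 z.2)) /\
  (\int[(leb \x leb)%E]_(z in D `*` setT) (cnorm2 (phi z.1 z.2))%:E < +oo)%E.

Definition ae_eq (D : set R) (f g : R -> C) : Prop :=
  {ae leb, forall x, D x -> f x = g x}.

Definition ae_eqxR (D : set R) (phi psi : R -> R -> C) : Prop :=
  {ae (leb \x leb)%E, forall z : R * R, D z.1 -> phi z.1 z.2 = psi z.1 z.2}.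

(* g in L^2(a,b) is the weak derivative of f on [a,b]; f is taken to be the
   absolutely continuous representative: f x = f a + int_a^x g *)
Definition isderiv (a b : R) (f g : R -> C) : Prop :=
  L2 `[a, b] g /\
  forall x, a <= x <= b -> f x = f a + cint `[a, x] g.

Definition H1 (a b : R) (f : R -> C) : Prop := exists g, isderiv a b f g.

Record state := State {
  su : R -> C; sv : R -> C; sU : R -> C; sV : R -> C;
  sp1 : R -> R -> C; sp2 : R -> R -> C }.

Definition inH10 (L : R) (u v : R -> C) : Prop :=
  H1 (- L) 0 u /\ H1 0 L v /\ u (- L) = 0 /\ v L = 0 /\ u 0 = v 0.

Definition inH (L : R) (s : state) : Prop :=
  inH10 L (su s) (sv s) /\ L2 `[- L, 0] (sU s) /\ L2 `[0, L] (sV s) /\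
  L2xR `[- L, 0] (sp1 s) /\ L2xR `[0, L] (sp2 s).

Definition H_eq (L : R) (s t : state) : Prop :=
  ae_eq `[- L, 0] (su s) (su t) /\ ae_eq `[0, L] (sv s) (sv t) /\
  ae_eq `[- L, 0] (sU s) (sU t) /\ ae_eq `[0, L] (sV s) (sV t) /\
  ae_eqxR `[- L, 0] (sp1 s) (sp1 t) /\ ae_eqxR `[0, L] (sp2 s) (sp2 t).

Definition mu (alpha xi : R) : R := `|xi| `^ ((2 * alpha - 1) / 2).
Definition Cst (alpha : R) : R := sin (alpha * pi) / pi.

Definition memeq (alpha eta : R) (phi : R -> R -> C) (W : R -> C) :=
  fun x xi => - ((`|xi| ^+ 2 + eta)%:C * phi x xi)%C + ((mu alpha xi)%:C * W x)%C.

(* s in D(A) and A s = F (in \mathcal H).  u1,u2 (resp. v1,v2) are the first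
   and second (weak) derivatives of u (resp. v). *)
Definition A_maps (rho1 rho2 k1 k2 L alpha eta : R) (s F : state) : Prop :=
  inH L s /\ inH10 L (sU s) (sV s) /\
  exists u1 u2 v1 v2 : R -> C,
    isderiv (- L) 0 (su s) u1 /\ isderiv (- L) 0 u1 u2 /\
    isderiv 0 L (sv s) v1 /\ isderiv 0 L v1 v2 /\
    (k1%:C * u1 0 = k2%:C * v1 0)%C /\
    L2xR `[- L, 0] (fun x xi => (`|xi|%:C * sp1 s x xi)%C) /\
    L2xR `[- L, 0] (memeq alpha eta (sp1 s) (sU s)) /\
    L2xR `[0, L] (fun x xi => (`|xi|%:C * sp2 s x xi)%C) /\
    L2xR `[0, L] (memeq alpha eta (sp2 s) (sV s)) /\
    ae_eq `[- L, 0] (sU s) (su F) /\ ae_eq `[0, L] (sV s) (sv F) /\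
    ae_eq `[- L, 0]
      (fun x => (rho1^-1)%:C * (k1%:C * u2 x
                 - (Cst alpha)%:C * cint setT (fun xi => (mu alpha xi)%:C * sp1 s x xi)))%C
      (sU F) /\
    ae_eq `[0, L]
      (fun x => (rho2^-1)%:C * (k2%:C * v2 x
                 - (Cst alpha)%:C * cint setT (fun xi => (mu alpha xi)%:C * sp2 s x xi)))%C
      (sV F) /\
    ae_eqxR `[- L, 0] (memeq alpha eta (sp1 s) (sU s)) (sp1 F) /\
    ae_eqxR `[0, L] (memeq alpha eta (sp2 s) (sV s)) (sp2 F).

Definition A_invertible (rho1 rho2 k1 k2 L alpha eta : R) : Prop :=
  (forall F, inH L F -> exists s, A_maps rho1 rho2 k1 k2 L alpha eta s F) /\
  (forall s t F, A_maps rho1 rho2 k1 k2 L alpha eta s F ->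
                 A_maps rho1 rho2 k1 k2 L alpha eta t F -> H_eq L s t).

End Defs.

(* If A were onto, some s in D(A) would satisfy A s = F, where the only
   nonzero component of F is phi1(x, xi) = 1_(0,1](xi).  The first component
   of A s = F forces U = 0, so for eta = 0 the memory equation reads
   -xi^2 phi1 = 1 on (0, 1], i.e. |xi phi1|^2 = xi^-2 there.  As xi^-2 is not
   integrable at 0, this contradicts |xi| phi1 in L^2(R; L^2), which is part of
   s in D(A). *)

From Pilot Require Import Defs.
From mathcomp Require Import all_boot all_order all_algebra.
From mathcomp Require Import all_classical all_reals all_analysis.
From mathcomp Require Import complex.
From mathcomp Require Import measurable_realfun ring lra.
Set Implicit Arguments.
Unset Strict Implicit.
Unset Printing Implicit Defensive.
Import Order.TTheory GRing.Theory Num.Theory.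
Local Open Scope ring_scope.
Local Open Scope classical_set_scope.

Section NonInvertibility.
Variable R : realType.
Local Notation C := R[i].
Local Notation leb := (@lebesgue_measure R).
Local Notation leb2 := (leb \x leb)%E.

Lemma cnorm2_ge0 (z : C) : 0 <= cnorm2 z.
Proof. by rewrite addr_ge0 ?sqr_ge0. Qed.

Lemma cnorm2_real (x : R) : cnorm2 x%:C%C = x ^+ 2.
Proof. by rewrite /cnorm2 /= expr0n addr0. Qed.

Lemma measurable_cnorm2 (dT : measure_display) (T : measurableType dT)
    (A : set T) (f : T -> C) :
  measurable_fun A (fun t => complex.Re (f t)) ->
  measurable_fun A (fun t => complex.Im (f t)) ->
  measurable_fun A (fun t => cnorm2 (f t)).
Proof. by move=> mRe mIm; apply: measurable_funD; apply: measurable_funX. Qed.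

Lemma L2_0 (D : set R) : L2 D (fun _ => 0).
Proof.
split; first exact: measurable_cst.
split; first exact: measurable_cst.
by rewrite /cnorm2 /= expr0n addr0 integral0 ltry.
Qed.

Lemma H1_0 (a b : R) : H1 a b (fun _ => 0).
Proof.
exists (fun _ => 0); split; first exact: L2_0.
by move=> x _; rewrite /cint /Rintegral /= integral0 addr0.
Qed.

Lemma L2xR_0 (D : set R) : L2xR D (fun _ _ => 0).
Proof.
split; first exact: measurable_cst.
split; first exact: measurable_cst.
by rewrite /cnorm2 /= expr0n addr0 integral0 ltry.
Qed.

Lemma L2xR_indic (D B : set R) :
  measurable D -> measurable B -> (leb D < +oo)%E -> (leb B < +oo)%E ->
  L2xR D (fun _ xi => (\1_B xi)%:C%C).
Proof.
move=> mD mB Dfin Bfin.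
have m_indic : measurable_fun (D `*` setT) (fun z : R * R => \1_B z.2 : R).
  apply: measurable_funTS.
  by apply: measurableT_comp => //; exact: measurable_indic.
split; first exact: m_indic.
split; first exact: measurable_cst.
have mDT : measurable (D `*` [set: R]) by exact: measurableX.
have indic_sqr (z : (R * R)%type) :
    D z.1 -> cnorm2 (\1_B z.2 : R)%:C%C = \1_(D `*` B) z.
  move=> Dz; rewrite cnorm2_real !indicE in_setX (mem_set Dz).
  by case: (z.2 \in B); rewrite ?expr1n ?expr0n.
under eq_integral => z /[!inE] -[Dz _] do rewrite indic_sqr //.
rewrite integral_indic //; last exact: measurableX.
have -> : D `*` B `&` D `*` setT = D `*` B.
  by apply/seteqP; split=> z /=; [case=> -[] | case].
rewrite [X in (X < _)%E](_ : _ = leb D * leb B)%E; last exact: product_measure1E.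
by rewrite lte_mul_pinfty ?measure_ge0 ?ge0_fin_numE.
Qed.

Lemma cnorm2_mul_of_sqr_mul (t : R) (p : C) :
  t != 0 -> ((t ^+ 2)%:C * p = -1)%C -> cnorm2 (t%:C * p)%C = t ^- 2.
Proof.
move=> t_neq0 tp.
have -> : (t%:C * p = (- t^-1)%:C)%C.
  by rewrite -[t in LHS](mulKf t_neq0) -expr2 rmorphM -mulrA tp mulrN1 rmorphN.
by rewrite cnorm2_real sqrrN exprVn.
Qed.

Lemma ae_prod_fst (D : set R) (P : R -> Prop) :
  {ae leb, forall x, D x -> P x} ->
  {ae leb2, forall z : (R * R)%type, D z.1 -> P z.1}.
Proof.
case=> N [mN N0 DP]; exists (N `*` setT); split.
- exact: measurableX.
- transitivity (leb N * leb setT)%E; first exact: product_measure1E.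
  by rewrite N0 mul0e.
- by move=> z /= not_P; split=> //; apply: DP => /= DPz; apply: not_P => /DPz.
Qed.

Lemma memeq_indic_inv_sqr (alpha : R) (D : set R) (phi : R -> R -> C)
    (U : R -> C) :
  Defs.ae_eq D U (fun _ => 0) ->
  ae_eqxR D (memeq alpha 0 phi U) (fun _ xi => (\1_`]0, 1] xi : R)%:C%C) ->
  {ae leb2, forall z : (R * R)%type, D z.1 -> 0 < z.2 <= 1 ->
     cnorm2 (`|z.2|%:C * phi z.1 z.2)%C = z.2 ^- 2}.
Proof.
move=> U0 memeq1.
apply: (filterS2 (ae_filter_ringOfSetsType leb2) _ (ae_prod_fst U0) memeq1).
move=> -[x xi] /= U0x memeq1x Dx xi01.
have /andP[xi_gt0 _] := xi01.
have := memeq1x Dx.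
rewrite /memeq (U0x Dx) mulr0 !addr0 indicE mem_set ?in_itv //=.
rewrite gtr0_norm // => sqr_phi.
apply: cnorm2_mul_of_sqr_mul; first exact: lt0r_neq0.
by rewrite -[LHS]opprK sqr_phi rmorph1.
Qed.

Section InverseSquareNotIntegrable.
Variables (D : set R) (d : R) (psi : R -> R -> C).
Hypotheses (mD : measurable D) (leb_D : leb D = d%:E).
Hypothesis psi_inv_sqr : {ae leb2, forall z : (R * R)%type,
  D z.1 -> 0 < z.2 <= 1 -> cnorm2 (psi z.1 z.2) = z.2 ^- 2}.
Hypothesis m_psi2 : measurable_fun (D `*` setT)
  (fun z : (R * R)%type => cnorm2 (psi z.1 z.2)).

Lemma integral_cnorm2_ge (r : R) : 0 < r <= 1 ->
  ((d / r)%:E <= \int[leb2]_(z in D `*` setT) (cnorm2 (psi z.1 z.2))%:E)%E.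
Proof.
move=> /andP[r_gt0 r_le1].
set E := D `*` `]0, r].
have mE : measurable E by exact: measurableX.
have mDT : measurable (D `*` [set: R]) by exact: measurableX.
have r2_ge0 : 0 <= r ^- 2 by rewrite invr_ge0 exprn_ge0 // ltW.
have m_indic :
    measurable_fun (D `*` setT) (fun z : (R * R)%type => (\1_E z : R)%:E).
  by apply/measurable_EFinP; exact: measurable_indic.
apply: (@le_trans _ _
    (\int[leb2]_(z in D `*` setT) ((r ^- 2)%:E * (\1_E z)%:E))%E).
  rewrite ge0_integralZl // integral_indic //.
  have -> : E `&` D `*` setT = E.
    by apply/seteqP; split=> z /=; [case=> -[] | case].
  rewrite [X in (_ <= _ * X)%E](_ : _ = leb D * leb `]0%R, r])%E; last first.
    exact: product_measure1E.
  rewrite lebesgue_measure_itv /= lte_fin r_gt0 leb_D oppr0 adde0 -!EFinM lee_fin.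
  suff -> : r ^- 2 * (d * r) = d / r by [].
  by field; exact: lt0r_neq0.
apply: ae_ge0_le_integral => //.
- by move=> z _; rewrite lee_fin mulr_ge0 // indicE.
- exact: measurable_funeM.
- by move=> z _; rewrite lee_fin cnorm2_ge0.
- exact/measurable_EFinP.
apply: (@filterS _ _ (ae_filter_ringOfSetsType leb2) _ _ _ psi_inv_sqr).
move=> -[x xi] /= psi_xi [Dx _].
rewrite indicE; case: (boolP ((x, xi) \in E)) => [|_]; last first.
  by rewrite mule0 lee_fin cnorm2_ge0.
rewrite inE => -[_ /=]; rewrite in_itv /= => /andP[xi_gt0 xi_le_r].
rewrite mule1 lee_fin psi_xi // ?xi_gt0 ?(le_trans xi_le_r r_le1) //.
rewrite lef_pV2 ?posrE ?exprn_gt0 ?(lt_le_trans xi_gt0) //.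
by apply: lerXn2r; rewrite // nnegrE ltW // (lt_le_trans xi_gt0).
Qed.

Lemma integral_cnorm2_eqy : 0 < d ->
  (\int[leb2]_(z in D `*` setT) (cnorm2 (psi z.1 z.2))%:E = +oo)%E.
Proof.
move=> d_gt0.
have I_ge0 : (0 <= \int[leb2]_(z in D `*` setT) (cnorm2 (psi z.1 z.2))%:E)%E.
  by apply: integral_ge0 => z _; rewrite lee_fin cnorm2_ge0.
move: I_ge0 integral_cnorm2_ge.
case: (\int[leb2]_(z in _) _)%E => [i i_ge0 lower | // | //].
rewrite lee_fin in i_ge0.
have r_gt0 : 0 < d / (i + d + 1) by rewrite divr_gt0 //; lra.
have r_le1 : d / (i + d + 1) <= 1 by rewrite ler_pdivrMr ?mul1r; lra.
have := lower _ (introT andP (conj r_gt0 r_le1)).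
rewrite lee_fin invf_div mulrCA divff ?mulr1 ?gt_eqF // => contra.
by exfalso; lra.
Qed.
End InverseSquareNotIntegrable.

Lemma not_L2xR_inv_sqr (D : set R) (d : R) (psi : R -> R -> C) :
  measurable D -> leb D = d%:E -> 0 < d ->
  {ae leb2, forall z : (R * R)%type,
    D z.1 -> 0 < z.2 <= 1 -> cnorm2 (psi z.1 z.2) = z.2 ^- 2} ->
  ~ L2xR D psi.
Proof.
move=> mD leb_D d_gt0 psi_inv_sqr [mRe [mIm]].
by rewrite (integral_cnorm2_eqy mD leb_D psi_inv_sqr (measurable_cnorm2 mRe mIm)).
Qed.

Lemma A_maps_memory1 (rho1 rho2 k1 k2 L alpha eta : R) (s F : state R) :
  A_maps rho1 rho2 k1 k2 L alpha eta s F ->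
  [/\ L2xR `[- L, 0] (fun x xi => (`|xi|%:C * sp1 s x xi)%C),
      Defs.ae_eq `[- L, 0] (sU s) (su F)
    & ae_eqxR `[- L, 0] (memeq alpha eta (sp1 s) (sU s)) (sp1 F)].
Proof.
case=> _ [_ [_ [_ [_ [_ [_ [_ [_ [_ [_ [xi_phi1 [_ [_ [_
  [U_eq [_ [_ [_ [memeq1 _]]]]]]]]]]]]]]]]]]].
by split.
Qed.
End NonInvertibility.

Theorem proposition4p4 (R : realType) (rho1 rho2 k1 k2 L alpha : R) :
  0 < rho1 -> 0 < rho2 -> 0 < k1 -> 0 < k2 -> 0 < L ->
  0 < alpha -> alpha < 1 ->
  ~ A_invertible rho1 rho2 k1 k2 L alpha 0.
Proof.
move=> _ _ _ _ L_gt0 _ _ [A_onto _].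
pose F := State (fun _ => 0) (fun _ => 0) (fun _ => 0) (fun _ => 0)
  (fun _ xi => (\1_`]0, 1] xi : R)%:C%C) (fun _ _ => 0).
have leb_D : lebesgue_measure `[- L, 0] = L%:E.
  by rewrite lebesgue_measure_itv /= lte_fin oppr_lt0 L_gt0 -EFinB sub0r opprK.
have F_in_H : inH L F.
  split; first by split; [exact: H1_0 | split; [exact: H1_0 |]].
  split; first exact: L2_0.
  split; first exact: L2_0.
  split; last exact: L2xR_0.
  apply: L2xR_indic => //; first by rewrite leb_D ltry.
  by rewrite lebesgue_measure_itv /= lte01 ltry.
have [s /A_maps_memory1[xi_phi1 U0 memeq1]] := A_onto F F_in_H.
exact: not_L2xR_inv_sqr (measurable_itv _) leb_D L_gt0
  (memeq_indic_inv_sqr U0 memeq1) xi_phi1.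
Qed.
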